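(* Let $G=\mathbb Z\ast\mathbb Z^2=\langle t\rangle\ast\langle a,b\mid [a,b]\rangle$ and let $\varphi$ be the automorphism of $G$ with $\varphi(t)=ta$, $\varphi(a)=a$, $\varphi(b)=b$. Then $\operatorname{Fix}(\varphi)=\langle a,b\rangle\ast t\langle a,b\rangle t^{-1}\cong\mathbb Z^2\ast\mathbb Z^2$, so $\operatorname{rk}(\operatorname{Fix}(\varphi))=4=2(\operatorname{rk}(G)-1)$; thus the bound $n(\operatorname{rk}(G)-n+1)$ for endomorphisms of a free product of $n$ free abelian groups is attained.
   Context: $\operatorname{rk}$ is the minimal number of generators; $\operatorname{Fix}(\varphi)=\{g\mid\varphi(g)=g\}$. *)

(* The free product A * B of two abelian groups (written
   additively, zmodType) is modelled concretely by reduced words: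
   sequences of syllables (inl x, x in A nonzero, or inr y, y in B nonzero)
   in which consecutive syllables come from different factors. *)
From mathcomp Require Import all_boot all_order all_algebra.
Set Implicit Arguments. Unset Strict Implicit. Unset Printing Implicit Defensive.
Import GRing.Theory.
Local Open Scope ring_scope.

Section FreeProduct.
Variables A B : zmodType.

Definition syl := (A + B)%type.
Definition word := seq syl.

Definition push (s : syl) (w : word) : word :=
  match s, w with
  | inl x, inl y :: w' => if x + y == 0 then w' else inl (x + y) :: w'
  | inr x, inr y :: w' => if x + y == 0 then w' else inr (x + y) :: w'
  | inl x, _ => if x == 0 then w else s :: w
  | inr x, _ => if x == 0 then w else s :: w
  end.

Definition norm (w : word) : word := foldr push [::] w.
Definition reduced (w : word) : bool := norm w == w.

Definition wone : word := [::].
Definition wmul (w1 w2 : word) : word := foldr push w2 w1.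
Definition negsyl (s : syl) : syl :=
  match s with inl x => inl (- x) | inr y => inr (- y) end.
Definition winv (w : word) : word := rev (map negsyl w).

Definition expn_w (w : word) (n : nat) : word := iter n (wmul w) wone.
Definition zpow (w : word) (z : int) : word :=
  match z with Posz n => expn_w w n | Negz n => winv (expn_w w n.+1) end.

Definition gen (S : seq word) (g : word) : Prop :=
  exists l : seq (bool * word),
    all (fun p => p.2 \in S) l /\
    g = foldr (fun p acc => wmul (if p.1 then winv p.2 else p.2) acc) wone l.

Definition generates (S : seq word) (H : word -> Prop) : Prop :=
  all reduced S /\ forall g, reduced g -> (H g <-> gen S g).
Definition has_rank (H : word -> Prop) (n : nat) : Prop :=
  (exists S, size S = n /\ generates S H) /\
  (forall S, generates S H -> (n <= size S)%N).

End FreeProduct.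

(* homomorphism out of a free product determined by its values on syllables
   (i.e. by homomorphisms on the two factors) *)
Definition ext (A B C D : zmodType) (f : syl A B -> word C D) (w : word A B)
  : word C D := foldr (fun s acc => wmul (f s) acc) (wone C D) w.

Definition Z2 : zmodType := (int * int)%type.
Definition GW := word int Z2.
Definition t_ : GW := [:: inl 1].
Definition a_ : GW := [:: inr (1, 0)].
Definition b_ : GW := [:: inr (0, 1)].

Definition phi_syl (s : syl int Z2) : GW :=
  match s with
  | inl n => zpow (wmul t_ a_) n
  | inr v => push (inr v) (wone int Z2)
  end.
Definition phi : GW -> GW := ext phi_syl.

Definition Fix (g : GW) : Prop := reduced g /\ phi g = g.

Definition psi_syl (s : syl Z2 Z2) : GW :=
  match s with
  | inl v => push (inr v) (wone int Z2)
  | inr v => wmul t_ (wmul (push (inr v) (wone int Z2)) (winv t_))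
  end.
Definition psi : word Z2 Z2 -> GW := ext psi_syl.

(* For G itself we use the t-form of a word: t^n is spelled as |n| letters
   t^(+-1), so g = u_0 t^e_1 u_1 ... t^e_k u_k with u_i in Z^2.  The t-form
   determines reduced words, phi acts on it by adding a after each t and
   subtracting a before each t^-1, and a t-form fixed by this action
   alternates t u t^-1 u' ...; such forms are exactly the t-forms of the
   images of psi : Z^2 * Z^2 -> G, v |-> v, v' |-> t v t^-1.  The same
   t-forms show that psi is injective.  Hence Fix(phi) = psi(Z^2 * Z^2) is
   generated by a, b, t a t^-1, t b t^-1, and abelianizing G (to Q^3) and
   Z^2 * Z^2 (to Q^4) gives the ranks 3 and 4. *)
From mathcomp Require Import all_boot all_order all_algebra zify.
Set Implicit Arguments. Unset Strict Implicit. Unset Printing Implicit Defensive.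
Import GRing.Theory.
Local Open Scope ring_scope.

Section FreeProductGroup.
Variables A B : zmodType.
Local Notation syl := (syl A B).
Local Notation word := (word A B).
Local Notation push := (@push A B).
Local Notation norm := (@norm A B).
Local Notation wmul := (@wmul A B).
Local Notation winv := (@winv A B).
Local Notation negsyl := (@negsyl A B).
Local Notation expn_w := (@expn_w A B).
Local Notation zpow := (@zpow A B).

Definition side (s : syl) : bool := if s is inl _ then true else false.
Definition nzsyl (s : syl) : bool :=
  match s with inl x => x != 0 | inr y => y != 0 end.
Definition other_side (s s' : syl) : bool := side s != side s'.
Definition wf (w : word) : bool := all nzsyl w && sorted other_side w.

Lemma wf_consE s w :
  wf (s :: w) = [&& nzsyl s, wf w & if w is s' :: _ then other_side s s' else true].
Proof.
rewrite /wf /=; case: w => [|s' w] /=; first by rewrite !andbT.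
by rewrite -!andbA; do !bool_congr.
Qed.

Lemma wf_cons s w : wf (s :: w) -> wf w.
Proof. by rewrite wf_consE => /and3P[]. Qed.

Lemma wf_same_side s s' w : side s = side s' -> wf (s :: s' :: w) = false.
Proof. by move=> e; rewrite wf_consE /other_side e eqxx !andbF. Qed.

Lemma wf_nzsyl s w : wf (s :: w) -> nzsyl s.
Proof. by rewrite wf_consE => /and3P[]. Qed.

Lemma push_wf_cons s w : wf (s :: w) -> push s w = s :: w.
Proof.
rewrite wf_consE => /and3P[hs _ hsw].
by case: s hs hsw => x; case: w => [|[y|y] w] //= hx _; rewrite (negbTE hx).
Qed.

Lemma push_wf s w : wf w -> wf (push s w).
Proof.
move=> hw; case: s => x; case: w hw => [|[y|y] w] hw /=;
  try by case: ifP => // hx; rewrite wf_consE /= hx ?hw.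
- case: eqP => hxy; first exact: wf_cons hw.
  by move: hw; rewrite !wf_consE => /and3P[_ -> ->]; rewrite !andbT; apply/eqP.
- case: eqP => hxy; first exact: wf_cons hw.
  by move: hw; rewrite !wf_consE => /and3P[_ -> ->]; rewrite !andbT; apply/eqP.
Qed.

Lemma norm_cons s w : norm (s :: w) = push s (norm w).
Proof. by []. Qed.

Lemma norm_wf w : wf (norm w).
Proof. by elim: w => [|s w IH] //=; apply: push_wf. Qed.

Lemma normK w : wf w -> norm w = w.
Proof.
elim: w => [|s w IH] //= h; rewrite IH ?(wf_cons h) //; exact: push_wf_cons.
Qed.

Lemma reducedE w : reduced w = wf w.
Proof.
apply/idP/idP => [/eqP <-|h]; first exact: norm_wf.
by rewrite /reduced normK.
Qed.

(* This
   one case analysis is shared by multiplication, homomorphisms and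
   abelianization. *)
Lemma push_fold (X : Type) (P : X -> Prop) (act : syl -> X -> X) (F : word -> X) :
  (forall s w, F (s :: w) = act s (F w)) -> (forall w, P (F w)) ->
  (forall x y z, P z -> act (inl x) (act (inl y) z) = act (inl (x + y)) z) ->
  (forall x y z, P z -> act (inr x) (act (inr y) z) = act (inr (x + y)) z) ->
  (forall z, P z -> act (inl 0) z = z) -> (forall z, P z -> act (inr 0) z = z) ->
  forall s w, F (push s w) = act s (F w).
Proof.
move=> Fcons PF actL actR act0L act0R s w.
have {}actL x y w' := actL x y _ (PF w'); have {}actR x y w' := actR x y _ (PF w').
have {}act0L w' := act0L _ (PF w'); have {}act0R w' := act0R _ (PF w').
case: s => x; case: w => [|[y|y] w] /=; case: eqP => [hx|_];
  by [rewrite hx ?act0L ?act0R | rewrite ?Fcons ?actL ?actR ?hx ?act0L ?act0R].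
Qed.

Lemma push_inl_add x y w : wf w -> push (inl x) (push (inl y) w) = push (inl (x + y)) w.
Proof.
case: w => [|[z|z] w] /=; try by case: eqP => [->|_] _ /=; rewrite ?addr0.
rewrite wf_consE => /and3P[hz hw hzw]; case: eqP => [hyz|hyz]; last by rewrite /= addrA.
have -> : x + y + z = x by rewrite -addrA hyz addr0.
by case: w hw hzw => [|[u|u] w'].
Qed.

Lemma push_inr_add x y w : wf w -> push (inr x) (push (inr y) w) = push (inr (x + y)) w.
Proof.
case: w => [|[z|z] w] /=; try by case: eqP => [->|_] _ /=; rewrite ?addr0.
rewrite wf_consE => /and3P[hz hw hzw]; case: eqP => [hyz|hyz]; last by rewrite /= addrA.
have -> : x + y + z = x by rewrite -addrA hyz addr0.
by case: w hw hzw => [|[u|u] w'].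
Qed.

Lemma push_inl0 w : wf w -> push (inl 0) w = w.
Proof.
case: w => [|[z|z] w] hw; rewrite /= ?eqxx //.
by have /= hz := wf_nzsyl hw; rewrite add0r (negbTE hz).
Qed.

Lemma push_inr0 w : wf w -> push (inr 0) w = w.
Proof.
case: w => [|[z|z] w] hw; rewrite /= ?eqxx //.
by have /= hz := wf_nzsyl hw; rewrite add0r (negbTE hz).
Qed.

Lemma wmul_wf v w : wf w -> wf (wmul v w).
Proof. by elim: v => [|s v IH] //= h; apply: push_wf; apply: IH. Qed.

Lemma wmul_push s v w : wf w -> wmul (push s v) w = push s (wmul v w).
Proof.
move=> hw; apply: (@push_fold _ wf push (wmul^~ w)) => //.
- by move=> u; apply: wmul_wf.
- exact: push_inl_add.
- exact: push_inr_add.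
- exact: push_inl0.
- exact: push_inr0.
Qed.

Lemma wmulA u v w : wf w -> wmul (wmul u v) w = wmul u (wmul v w).
Proof. by move=> hw; elim: u => [|s u IH] //=; rewrite wmul_push ?IH. Qed.

Lemma wmulw1 w : wf w -> wmul w [::] = w.
Proof. exact: normK. Qed.

Lemma winv_wf w : wf w -> wf (winv w).
Proof.
have nz_neg s : nzsyl (negsyl s) = nzsyl s by case: s => x /=; rewrite oppr_eq0.
case/andP=> hnz halt; apply/andP; split.
  by rewrite /winv all_rev all_map; apply: sub_all hnz => s /=; rewrite nz_neg.
rewrite /winv rev_sorted; have : sorted other_side (map negsyl w).
  by rewrite sorted_map; apply: sub_sorted halt => x y; case: x; case: y.
by apply: sub_sorted => x y; rewrite /other_side eq_sym.
Qed.

Lemma winvK : involutive winv.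
Proof.
have negsylK : involutive negsyl by case=> x /=; rewrite opprK.
by move=> w; rewrite /winv map_rev revK (mapK negsylK).
Qed.

Lemma wmulVw w : wf w -> wmul (winv w) w = [::].
Proof.
elim: w => [|s w IH] // h; rewrite /winv /= rev_cons -/(winv w) /wmul foldr_rcons.
have -> : push (negsyl s) (s :: w) = w by case: s h => x h /=; rewrite addNr eqxx.
exact: IH (wf_cons h).
Qed.

Lemma wmulwV w : wf w -> wmul w (winv w) = [::].
Proof. by move=> h; rewrite -{1}(winvK w) wmulVw ?winv_wf. Qed.

Lemma winv_unique x y : wf x -> wf y -> wmul x y = [::] -> y = winv x.
Proof.
move=> hx hy h; have -> : y = wmul (wmul (winv x) x) y by rewrite wmulVw.
by rewrite wmulA // h wmulw1 // winv_wf.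
Qed.

Lemma winvM u v : wf u -> wf v -> winv (wmul u v) = wmul (winv v) (winv u).
Proof.
move=> hu hv; symmetry; apply: winv_unique; rewrite ?wmul_wf ?winv_wf //.
rewrite wmulA ?wmul_wf ?winv_wf // -(wmulA v) ?winv_wf //.
by rewrite wmulwV //= wmulwV.
Qed.

Lemma expn_wf w n : wf w -> wf (expn_w w n).
Proof. by move=> h; elim: n => [|n IH] //=; apply: wmul_wf. Qed.

Lemma zpow_wf w z : wf w -> wf (zpow w z).
Proof. by move=> h; case: z => n; [exact: expn_wf | exact/winv_wf/expn_wf]. Qed.

Lemma expnSr w n : wf w -> expn_w w n.+1 = wmul (expn_w w n) w.
Proof.
move=> h; elim: n => [|n IH]; first exact: wmulw1.
by rewrite [in RHS]/expn_w iterS -/(expn_w w n) wmulA -?IH ?expn_wf.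
Qed.

Lemma zpowS w z : wf w -> zpow w (z + 1) = wmul w (zpow w z).
Proof.
move=> h; case: z => [n|[|n]].
- by have -> : Posz n + 1 = Posz n.+1 by lia.
- by rewrite /= wmulw1 // wmulwV.
- have -> : Negz n.+1 + 1 = Negz n by rewrite !NegzE; lia.
  change (winv (expn_w w n.+1) = wmul w (winv (expn_w w n.+2))).
  rewrite [expn_w w n.+2]expnSr // winvM ?expn_wf //.
  by rewrite -(@wmulA w (winv w)) ?winv_wf ?expn_wf // wmulwV.
Qed.

Lemma zpowB1 w z : wf w -> zpow w (z - 1) = wmul (winv w) (zpow w z).
Proof. by move=> h; rewrite -{2}(subrK 1 z) zpowS // -wmulA ?zpow_wf // wmulVw. Qed.

Lemma zpowD w x y : wf w -> zpow w (x + y) = wmul (zpow w x) (zpow w y).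
Proof.
move=> h; elim/int_rect: x => [|n IH|n IH]; first by rewrite add0r.
- have -> : (n.+1 : int) + y = (n%:Z + y) + 1 by lia.
  have -> : (n.+1 : int) = n%:Z + 1 by lia.
  by rewrite !zpowS // IH wmulA ?zpow_wf.
- have -> : - (n.+1 : int) + y = (- n%:Z + y) - 1 by lia.
  have -> : - (n.+1 : int) = - n%:Z - 1 by lia.
  by rewrite !zpowB1 // IH wmulA ?zpow_wf.
Qed.

Section Conjugation.
Variable c : word.
Hypothesis c_wf : wf c.

Definition conjw (X : word) : word := wmul c (wmul X (winv c)).

Lemma conj_wf X : wf (conjw X).
Proof. by rewrite /conjw wmul_wf ?wmul_wf ?winv_wf. Qed.

Lemma conjM X Y : wf X -> wf Y -> conjw (wmul X Y) = wmul (conjw X) (conjw Y).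
Proof.
move=> hX hY; have hc' := winv_wf c_wf.
rewrite /conjw (@wmulA c (wmul X (winv c))) ?wmul_wf // (@wmulA X (winv c)) ?wmul_wf //.
by rewrite -(@wmulA (winv c) c) ?wmul_wf // wmulVw // (@wmulA X Y).
Qed.

Lemma conjV X : wf X -> conjw (winv X) = winv (conjw X).
Proof.
move=> hX; apply: winv_unique; rewrite ?conj_wf //.
by rewrite -conjM ?winv_wf // wmulwV // /conjw /= wmulwV.
Qed.

Lemma conj_zpow X z : wf X -> conjw (zpow X z) = zpow (conjw X) z.
Proof.
move=> hX; have conj_expn n : conjw (expn_w X n) = expn_w (conjw X) n.
  elim: n => [|n IH] /=; first exact: wmulwV.
  by rewrite conjM ?expn_wf // IH.
case: z => n; first exact: conj_expn.
change (conjw (winv (expn_w X n.+1)) = winv (expn_w (conjw X) n.+1)).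
by rewrite conjV ?expn_wf ?conj_expn.
Qed.
End Conjugation.

Definition signed (p : bool * word) : word := if p.1 then winv p.2 else p.2.
Definition gfold (l : seq (bool * word)) : word :=
  foldr (fun p acc => wmul (signed p) acc) [::] l.
Definition flip_signs (l : seq (bool * word)) : seq (bool * word) :=
  rev (map (fun p => (~~ p.1, p.2)) l).

Lemma signed_wf p : wf p.2 -> wf (signed p).
Proof. by case: p => [[] x] //= h; apply: winv_wf. Qed.

Lemma gfold_wf l : all (fun p => wf p.2) l -> wf (gfold l).
Proof. by elim: l => [|p l IH] //= /andP[hp hl]; apply: wmul_wf; exact: IH. Qed.

Lemma gfold_cat l1 l2 : all (fun p => wf p.2) l2 ->
  gfold (l1 ++ l2) = wmul (gfold l1) (gfold l2).
Proof. by move=> h2; elim: l1 => [|p l1 IH] //=; rewrite IH wmulA ?gfold_wf. Qed.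

Lemma gfold_flip l : all (fun p => wf p.2) l -> winv (gfold l) = gfold (flip_signs l).
Proof.
elim: l => [|p l IH] //= /andP[hp hl].
rewrite winvM ?signed_wf ?gfold_wf // IH // /flip_signs /= rev_cons -cats1 gfold_cat /=;
  last by rewrite hp.
rewrite wmulw1; last by case: p hp => [[] x] //= /winv_wf.
by case: p hp => [[] x] //= _; rewrite winvK.
Qed.

Section Generated.
Variable S : seq word.
Hypothesis S_wf : all wf S.

Lemma gen_list_wf l : all (fun p : bool * word => p.2 \in S) l -> all (fun p => wf p.2) l.
Proof. by move=> h; apply/allP => p /(allP h) /(allP S_wf). Qed.

Lemma genE g :
  gen S g <-> exists l, all (fun p : bool * word => p.2 \in S) l /\ g = gfold l.
Proof. by []. Qed.

Lemma gen_nil : gen S [::].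
Proof. by exists [::]. Qed.

Lemma gen_mem s : s \in S -> gen S s.
Proof.
move=> h; exists [:: (false, s)]; split; first by rewrite /= h.
by rewrite /= wmulw1 //; apply: (allP S_wf).
Qed.

Lemma gen_mul x y : gen S x -> gen S y -> gen S (wmul x y).
Proof.
move=> /genE[l1 [h1 ->]] /genE[l2 [h2 ->]]; apply/genE; exists (l1 ++ l2).
by rewrite all_cat h1 h2 gfold_cat ?gen_list_wf.
Qed.

Lemma gen_inv x : gen S x -> gen S (winv x).
Proof.
move=> /genE[l [h ->]]; apply/genE; exists (flip_signs l).
split; last by rewrite gfold_flip ?gen_list_wf.
by rewrite all_rev all_map; apply: sub_all h => q.
Qed.

Lemma gen_zpow x z : gen S x -> gen S (zpow x z).
Proof.
move=> h; have gen_expn n : gen S (expn_w x n).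
  by elim: n => [|n IH] /=; [apply: gen_nil | apply: gen_mul].
by case: z => n; [exact: gen_expn | exact/gen_inv/gen_expn].
Qed.

Lemma gen_zpow2 x y m n : x \in S -> y \in S -> gen S (wmul (zpow x m) (zpow y n)).
Proof. by move=> hx hy; apply: gen_mul; apply: gen_zpow; apply: gen_mem. Qed.
End Generated.

Section AdditiveMaps.
Variables (X : zmodType) (h : X -> word).
Hypothesis h_wf : forall x, wf (h x).
Hypothesis hD : forall x y, h (x + y) = wmul (h x) (h y).

Lemma additive0 : h 0 = [::].
Proof.
have h0 := h_wf 0.
by rewrite -(wmulVw h0) -{3}[0]addr0 hD -wmulA // wmulVw.
Qed.

Lemma additiveN x : h (- x) = winv (h x).
Proof. by apply: winv_unique; rewrite // -hD subrr additive0. Qed.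

Lemma additive_zpow x z : zpow (h x) z = h (x *~ z).
Proof.
have additive_expn n : expn_w (h x) n = h (x *+ n).
  by elim: n => [|n IH]; rewrite ?mulr0n ?additive0 // mulrS hD -IH.
by case: z => n; rewrite /zpow additive_expn // -additiveN.
Qed.
End AdditiveMaps.

Definition embL (x : A) : word := push (inl x) [::].
Definition embR (y : B) : word := push (inr y) [::].

Lemma embL_wf x : wf (embL x). Proof. exact: push_wf. Qed.
Lemma embR_wf y : wf (embR y). Proof. exact: push_wf. Qed.

Lemma embLD x y : embL (x + y) = wmul (embL x) (embL y).
Proof.
rewrite /embL wmul_push ?push_wf //.
exact: (esym (push_inl_add x y (isT : wf [::]))).
Qed.

Lemma embRD x y : embR (x + y) = wmul (embR x) (embR y).
Proof.
rewrite /embR wmul_push ?push_wf //.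
exact: (esym (push_inr_add x y (isT : wf [::]))).
Qed.
End FreeProductGroup.
Arguments wf {A B}.
Arguments gfold {A B}.

Section Extension.
Variables A B C D : zmodType.
Variable f : syl A B -> word C D.
Hypothesis f_wf : forall s, wf (f s).
Hypothesis fL : forall x y, f (inl (x + y)) = wmul (f (inl x)) (f (inl y)).
Hypothesis fR : forall x y, f (inr (x + y)) = wmul (f (inr x)) (f (inr y)).

Lemma ext_wf w : wf (ext f w).
Proof. by elim: w => [|s w IH] //=; apply: wmul_wf. Qed.

Lemma ext_push s w : ext f (push s w) = wmul (f s) (ext f w).
Proof.
apply: (push_fold (P := @wf C D) (act := fun s => wmul (f s)) (F := ext f)) => //.
- exact: ext_wf.
- by move=> x y z hz; rewrite -wmulA // -fL.
- by move=> x y z hz; rewrite -wmulA // -fR.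
- by move=> z _; rewrite (additive0 (fun x => f_wf (inl x)) fL).
- by move=> z _; rewrite (additive0 (fun y => f_wf (inr y)) fR).
Qed.

Lemma ext_norm w : ext f (norm w) = ext f w.
Proof. by elim: w => [|s w IH] //=; rewrite ext_push IH. Qed.

Lemma ext_mul u v : ext f (wmul u v) = wmul (ext f u) (ext f v).
Proof. by elim: u => [|s u IH] //=; rewrite ext_push IH wmulA ?ext_wf. Qed.

Lemma ext_inv w : wf w -> ext f (winv w) = winv (ext f w).
Proof.
by move=> hw; apply: winv_unique; rewrite ?ext_wf // -ext_mul wmulwV.
Qed.

Lemma ext_gfold l : all (fun p => wf p.2) l ->
  ext f (gfold l) = gfold (map (fun p => (p.1, ext f p.2)) l).
Proof.
elim: l => [|[b w] l IH] //= /andP[hw hl].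
by rewrite ext_mul IH //; case: b => //=; rewrite ext_inv.
Qed.

Lemma gen_ext_preimage (W : seq (word A B)) x :
  (forall u v, wf u -> wf v -> ext f u = ext f v -> u = v) -> all wf W -> wf x ->
  gen (map (ext f) W) (ext f x) -> gen W x.
Proof.
move=> f_inj hW hx /genE[l [hl e]].
pose pull (p : bool * word C D) := (p.1, nth [::] W (index p.2 (map (ext f) W))).
have hl' : all (fun p : bool * word A B => p.2 \in W) (map pull l).
  rewrite all_map; apply/allP => p hp /=; apply: mem_nth.
  by rewrite -(size_map (ext f)) index_mem (allP hl).
apply/genE; exists (map pull l); split => //; apply: f_inj => //.
  exact/gfold_wf/gen_list_wf/hl'.
rewrite e ext_gfold ?(gen_list_wf hW) // -map_comp; congr gfold.
rewrite -[LHS]map_id; apply/eq_in_map => -[b s] /= hs; congr pair.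
have hi : (index s (map (ext f) W) < size W)%N.
  by rewrite -(size_map (ext f)) index_mem (allP hl _ hs).
by rewrite -(nth_map [::] [::]) // nth_index // (allP hl _ hs).
Qed.

Lemma ext_flat w : ext f w = norm (flatten (map f w)).
Proof. by elim: w => [|s w IH] //=; rewrite IH /norm foldr_cat. Qed.
End Extension.

Section Abelianization.
Variables (A B : zmodType) (F : fieldType) (n : nat).
Variables (fA : A -> 'rV[F]_n) (fB : B -> 'rV[F]_n).
Hypothesis fAD : forall x y, fA (x + y) = fA x + fA y.
Hypothesis fBD : forall x y, fB (x + y) = fB x + fB y.

Definition ab_syl (s : syl A B) : 'rV[F]_n :=
  match s with inl x => fA x | inr y => fB y end.
Definition nu (w : word A B) : 'rV[F]_n := foldr (fun s acc => ab_syl s + acc) 0 w.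

Lemma nu_push s w : nu (push s w) = ab_syl s + nu w.
Proof.
have fA0 : fA 0 = 0 by apply: (@addrI _ (fA 0)); rewrite -fAD !addr0.
have fB0 : fB 0 = 0 by apply: (@addrI _ (fB 0)); rewrite -fBD !addr0.
apply: (push_fold (P := fun _ => True) (act := fun s v => ab_syl s + v) (F := nu)) => //.
- by move=> x y z _; rewrite /= addrA fAD.
- by move=> x y z _; rewrite /= addrA fBD.
- by move=> z _; rewrite /= fA0 add0r.
- by move=> z _; rewrite /= fB0 add0r.
Qed.

Lemma nu_wmul u v : nu (wmul u v) = nu u + nu v.
Proof. by elim: u => [|s u IH] /=; rewrite ?add0r // nu_push IH addrA. Qed.

Lemma nu_winv w : wf w -> nu (winv w) = - nu w.
Proof. by move=> h; apply/eqP; rewrite -subr_eq0 opprK -nu_wmul wmulVw. Qed.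

Definition nu_mx (S : seq (word A B)) : 'M[F]_(size S, n) :=
  \matrix_(i < size S) nu (nth [::] S i).

Lemma nu_gen (S : seq (word A B)) x : all wf S -> gen S x -> (nu x <= nu_mx S)%MS.
Proof.
move=> hS /genE[l [hl ->]]; elim: l hl => [|[b s] l IH] /=; first by rewrite sub0mx.
case/andP=> hs hl; rewrite nu_wmul addmx_sub ?IH //.
have nu_s : (nu s <= nu_mx S)%MS.
  have hi : (index s S < size S)%N by rewrite index_mem.
  have -> : nu s = row (Ordinal hi) (nu_mx S) by apply/rowP => j; rewrite !mxE nth_index.
  exact: row_sub.
by case: b; rewrite /signed //= nu_winv ?eqmx_opp //; apply: (allP hS).
Qed.

Lemma rank_lb (S : seq (word A B)) : all wf S ->
  (forall i : 'I_n, exists2 x, gen S x & nu x = delta_mx 0 i) -> (n <= size S)%N.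
Proof.
move=> hS hx; have : (1%:M <= nu_mx S)%MS.
  by apply/row_subP => i; rewrite row1; have [x hg <-] := hx i; exact: nu_gen.
by move/mxrankS; rewrite mxrank1 => /leq_trans; apply; apply: rank_leq_row.
Qed.
End Abelianization.

Definition avec : Z2 := (1, 0).

Lemma phi_syl_wf s : wf (phi_syl s).
Proof. by case: s => [n|v]; [apply: zpow_wf | apply: embR_wf]. Qed.

Lemma psi_syl_wf s : wf (psi_syl s).
Proof. by case: s => v; [apply: embR_wf | apply: (@conj_wf _ _ t_)]. Qed.

Lemma phiD : (forall x y, phi_syl (inl (x + y)) = wmul (phi_syl (inl x)) (phi_syl (inl y))) /\
  (forall x y, phi_syl (inr (x + y)) = wmul (phi_syl (inr x)) (phi_syl (inr y))).
Proof. by split=> x y; [apply: zpowD | apply: (embRD int)]. Qed.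

Lemma psiD : (forall x y, psi_syl (inl (x + y)) = wmul (psi_syl (inl x)) (psi_syl (inl y))) /\
  (forall x y, psi_syl (inr (x + y)) = wmul (psi_syl (inr x)) (psi_syl (inr y))).
Proof.
split=> x y; first exact: (embRD int).
by rewrite /psi_syl -!/(conjw t_ _) -!/(embR int _) embRD conjM ?embR_wf.
Qed.

Lemma psi_wf w : wf (psi w).
Proof. exact: ext_wf. Qed.

Lemma psi_norm w : psi (norm w) = psi w.
Proof. exact: (ext_norm psi_syl_wf psiD.1 psiD.2). Qed.

Lemma psi_mul u v : psi (wmul u v) = wmul (psi u) (psi v).
Proof. exact: (ext_mul psi_syl_wf psiD.1 psiD.2). Qed.

Lemma psi_inv w : wf w -> psi (winv w) = winv (psi w).
Proof. exact: (ext_inv psi_syl_wf psiD.1 psiD.2). Qed.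

(* The t-form of a word of G: spelling every power t^n as |n| letters t^(+-1),
   a word reads u_0 t^e_1 u_1 ... t^e_k u_k with u_i in Z^2.  Its t-form is
   (u_0, [:: (e_1, u_1); ...; (e_k, u_k)]), with e_i = true for t, false for
   t^-1.  It is computed by prepending syllables with [tstep]. *)
Definition tform := (Z2 * seq (bool * Z2))%type.
Definition tstep (s : syl int Z2) (p : tform) : tform :=
  match s with
  | inr v => (v + p.1, p.2)
  | inl n =>
    if n == 0 then p else (0, nseq (absz n).-1 (0 < n, 0) ++ (0 < n, p.1) :: p.2)
  end.
Definition tf (w : GW) : tform := foldr tstep (0, [::]) w.

(* A t-form is reduced when no letter t^e is followed by t^-e with a trivial
   element of Z^2 in between. *)
Definition tcompat (x y : bool * Z2) : bool := (x.2 != 0) || (x.1 == y.1).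
Definition treduced (p : tform) : bool := sorted tcompat p.2.

Lemma tf_cons s w : tf (s :: w) = tstep s (tf w). Proof. by []. Qed.

Lemma tf_cat X Y : tf (X ++ Y) = foldr tstep (tf Y) X.
Proof. by rewrite /tf foldr_cat. Qed.

Lemma tstep0L p : tstep (inl 0) p = p. Proof. by []. Qed.
Lemma tstep0R p : tstep (inr 0) p = p. Proof. by case: p => u l; rewrite /= add0r. Qed.

Lemma tstep_inl_add x y q : x != 0 -> y != 0 -> (0 < x) = (0 < y) ->
  tstep (inl (x + y)) q = tstep (inl x) (tstep (inl y) q).
Proof.
move=> hx hy hs /=; rewrite (negbTE hx) (negbTE hy).
have hxy : x + y != 0 by apply/eqP; lia.
rewrite (negbTE hxy); have -> : (0 < x + y) = (0 < x) by lia.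
rewrite -hs; congr (_, _).
have -> : (absz (x + y)).-1 = ((absz x).-1 + (absz y).-1).+1 by lia.
by rewrite -addnS nseqD -catA.
Qed.

Definition cancels (s : syl int Z2) (w : GW) : bool :=
  match s, w with
  | inl x, inl y :: _ => (x != 0) && ((0 < x) != (0 < y))
  | _, _ => false
  end.

Lemma tf_push s w : wf w -> ~~ cancels s w -> tf (push s w) = tstep s (tf w).
Proof.
move=> hw hc; case: s hc => x hc; have [->|hx] := eqVneq x 0;
  rewrite ?push_inl0 ?push_inr0 ?tstep0L ?tstep0R //.
- case: w hw hc => [|[y|y] w] hw hc.
  + by have -> : push (inl x) [::] = [:: inl x] by rewrite /= (negbTE hx).
  + have -> : push (inl x) (inl y :: w) = if x + y == 0 then w else inl (x + y) :: w by [].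
    move: hc; rewrite /= hx /= negbK => /eqP hs.
    have hy : y != 0 := wf_nzsyl hw.
    have hxy : x + y != 0 by apply/eqP; lia.
    by rewrite (negbTE hxy) !tf_cons tstep_inl_add.
  + by have -> : push (inl x) (inr y :: w) = [:: inl x, inr y & w] by rewrite /= (negbTE hx).
- case: w hw hc => [|[y|y] w] hw hc.
  + by have -> : push (inr x) [::] = [:: inr x] by rewrite /= (negbTE hx).
  + by have -> : push (inr x) (inl y :: w) = [:: inr x, inl y & w] by rewrite /= (negbTE hx).
  + have -> : push (inr x) (inr y :: w) = if x + y == 0 then w else inr (x + y) :: w by [].
    rewrite !tf_cons /= addrA; case: (x + y =P 0) => [->|_] //.
    by rewrite add0r; case: (tf w).
Qed.

Lemma treduced_step s p : treduced (tstep s p) -> treduced p.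
Proof.
case: s => [n|v] //=; case: ifP => // _ /cat_sorted2[_] /=.
exact: path_sorted.
Qed.

(* Normalizing a word does not change its t-form, provided that t-form is
   reduced: a cancellation by [push] would create a subword t^e t^-e. *)
Lemma tf_norm W : treduced (tf W) -> tf (norm W) = tf W.
Proof.
elim: W => [|s W IH] // h; have IH' := IH (treduced_step h).
rewrite /= tf_push ?norm_wf ?IH' //.
case: s h => [x|v] h //=; case hN: (norm W) => [|[y|y] W'] //.
apply/negP => /andP[hx hs].
have hy : y != 0 by have := norm_wf W; rewrite hN => /wf_nzsyl.
move: IH'; rewrite hN tf_cons /= (negbTE hy) => hW.
move: h; rewrite tf_cons -hW /= (negbTE hx) => /cat_sorted2[_] /=.
by case: (absz y).-1 => [|k] /= /andP[+ _]; rewrite /tcompat /= => e; rewrite e in hs.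
Qed.

(* phi on t-forms: phi(t) = t a and phi(t^-1) = a^-1 t^-1, so phi adds a to
   the element following each letter t and subtracts a from the element
   preceding each letter t^-1. *)
Definition a_if (b : bool) : Z2 := if b then avec else 0.
Definition next_is_inv (l : seq (bool * Z2)) : bool :=
  if l is (e, _) :: _ then ~~ e else false.
Fixpoint phi_letters (l : seq (bool * Z2)) : seq (bool * Z2) :=
  match l with
  | [::] => [::]
  | (e, u) :: l' => (e, u + a_if e - a_if (next_is_inv l')) :: phi_letters l'
  end.
Definition phi_tform (p : tform) : tform :=
  (p.1 - a_if (next_is_inv p.2), phi_letters p.2).

Definition ta_block : GW := [:: inl 1; inr avec].
Definition ta_inv_block : GW := [:: inr (- avec); inl (-1)].

Lemma expn_ta n : expn_w (wmul t_ a_) n = flatten (nseq n ta_block).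
Proof. by elim: n => [|[|n] IH] //; rewrite /expn_w iterS -/(expn_w _ _) IH. Qed.

Lemma winv_expn_ta n : winv (expn_w (wmul t_ a_) n) = flatten (nseq n ta_inv_block).
Proof.
have comm k (x : GW) : flatten (nseq k x) ++ x = x ++ flatten (nseq k x).
  by elim: k => [|k IH] /=; rewrite ?cats0 // -catA IH.
rewrite expn_ta /winv; elim: n => [|n IH] //=.
by rewrite -[_ :: _ :: _]/([:: inl (-1); inr (- avec)] ++ _) rev_cat IH comm.
Qed.

Lemma tf_ta_blocks k q : foldr tstep q (flatten (nseq k.+1 ta_block)) =
  (0, nseq k (true, avec) ++ (true, avec + q.1) :: q.2).
Proof.
elim: k => [|k IH] //; rewrite -[flatten _]/(ta_block ++ flatten (nseq k.+1 ta_block)).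
by rewrite foldr_cat IH /= addr0.
Qed.

Lemma tf_ta_inv_blocks k q : foldr tstep q (flatten (nseq k.+1 ta_inv_block)) =
  (- avec, nseq k (false, - avec) ++ (false, q.1) :: q.2).
Proof.
elim: k => [|k IH]; first by rewrite /= addr0.
rewrite -[flatten _]/(ta_inv_block ++ flatten (nseq k.+1 ta_inv_block)).
by rewrite foldr_cat IH /= addr0.
Qed.

Lemma phi_letters_pos k u l : phi_letters (nseq k (true, 0) ++ (true, u) :: l) =
  nseq k (true, avec) ++ (true, u + avec - a_if (next_is_inv l)) :: phi_letters l.
Proof.
elim: k => [|k IH] //=; rewrite IH; congr (_ :: _).
by case: k {IH} => [|k] /=; rewrite add0r subr0.
Qed.

Lemma phi_letters_neg k u l : phi_letters (nseq k (false, 0) ++ (false, u) :: l) =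
  nseq k (false, - avec) ++ (false, u - a_if (next_is_inv l)) :: phi_letters l.
Proof.
elim: k => [|k IH] /=; first by rewrite addr0.
rewrite IH; congr (_ :: _).
by case: k {IH} => [|k] /=; rewrite addr0 sub0r.
Qed.

Lemma phi_tstep s p : foldr tstep (phi_tform p) (phi_syl s) = phi_tform (tstep s p).
Proof.
case: p => u l; case: s => [[[|k]|k]|v] //.
- rewrite /phi_syl /zpow expn_ta tf_ta_blocks /phi_tform /= phi_letters_pos /=.
  congr (_, _); first by case: k => [|k] /=; rewrite subr0.
  by rewrite addrA (addrC avec).
- change (phi_syl (inl (Negz k))) with (winv (expn_w (wmul t_ a_) k.+1)).
  rewrite winv_expn_ta tf_ta_inv_blocks /phi_tform /= phi_letters_neg /=.
  by congr (_, _); case: k => [|k] /=; rewrite sub0r.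
- rewrite /phi_syl /=; case: eqP => [->|_] /=; first by rewrite add0r.
  by rewrite /phi_tform /= addrA.
Qed.

Lemma tf_phi w : tf (flatten (map phi_syl w)) = phi_tform (tf w).
Proof. by elim: w => [|s w IH] //=; rewrite tf_cat IH phi_tstep. Qed.

Lemma tf_head w : wf w -> (tf w).1 = if w is inr v :: _ then v else 0.
Proof.
case: w => [|[n|v] w] // hw; rewrite tf_cons /=.
  by have /= hn := wf_nzsyl hw; rewrite (negbTE hn).
case: w hw => [|[n|v'] w] hw; rewrite ?addr0 //; last by rewrite wf_same_side in hw.
have /= hn := wf_nzsyl (wf_cons hw).
by change (v + (tstep (inl n) (tf w)).1 = v); rewrite /= (negbTE hn) addr0.
Qed.

Lemma path_tcompat e u l : u != 0 -> sorted tcompat l -> path tcompat (e, u) l.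
Proof. by case: l => [|x l] //= hu ->; rewrite /tcompat /= hu. Qed.

Lemma sorted_tcompat_nseq k e u l : sorted tcompat ((e, u) :: l) ->
  sorted tcompat (nseq k (e, 0) ++ (e, u) :: l).
Proof.
elim: k => [|k IH] //= h; have := IH h.
by case: k {IH} => [|k] /= ->; rewrite /tcompat /= eqxx ?orbT.
Qed.

Lemma treduced_tf w : wf w -> treduced (tf w).
Proof.
elim: w => [|s w IH] // h; have hw := wf_cons h; have IHw := IH hw.
case: s h => [n|v] h; rewrite tf_cons /treduced /=; last exact: IHw.
case: ifP => // hn; apply: sorted_tcompat_nseq; rewrite (tf_head hw).
case: w {IH} hw IHw h => [|[m|v] w] // hw IHw h; first by rewrite wf_same_side in h.
exact: path_tcompat (wf_nzsyl hw) IHw.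
Qed.

Lemma sorted_phi_letters l : sorted tcompat l -> sorted tcompat (phi_letters l).
Proof.
elim: l => [|[e u] l IH] //= h.
case: l IH h => [|[e2 u2] l] //= IH /andP[hr hs].
rewrite (IH hs) andbT; move: hr; rewrite /tcompat /=.
case: (e =P e2) => [->|ne]; first by rewrite !orbT.
by rewrite !orbF; case: e e2 ne {IH hs} => [] [] //= _; rewrite ?addrK ?addr0 ?subr0.
Qed.

(* A fixed point of phi has a t-form fixed by [phi_tform]: the t-form of
   the unreduced image word is reduced, hence equals that of phi g. *)
Lemma fix_phi_tform g : wf g -> phi g = g -> phi_tform (tf g) = tf g.
Proof.
move=> hg hphi.
have hred : treduced (tf (flatten (map phi_syl g))).
  by rewrite tf_phi; apply: sorted_phi_letters; apply: treduced_tf.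
by rewrite -tf_phi -tf_norm // -ext_flat -/phi hphi.
Qed.

Fixpoint alternating (l : seq (bool * Z2)) : bool :=
  match l with
  | [::] => true
  | (true, _) :: (false, _) :: l' => alternating l'
  | _ => false
  end.

Lemma phi_letters_fixed l : phi_letters l = l -> ~~ next_is_inv l -> alternating l.
Proof.
have addr_id (u x : Z2) : u + x = u -> x = 0 by rewrite -{2}(addr0 u) => /addrI.
have avec_neq0 : avec != 0 by [].
move: {2}(size l) (leqnn (size l)) => n; elim: n l => [|n IH] [|[e u] l] //= hs hm hn.
case: e hm hn => //= hm _; case: l hs hm => [|[e2 u2] l] /= hs.
  by move=> []; rewrite subr0 => /addr_id /eqP; rewrite (negbTE avec_neq0).
case=> hu hu2 hl; case: e2 hu hu2 hl => /= hu hu2 hl.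
  by move: hu; rewrite subr0 => /addr_id /eqP; rewrite (negbTE avec_neq0).
move: hu2; rewrite addr0 => /addr_id /eqP; rewrite oppr_eq0 => hnext.
by apply: IH => //; [rewrite -ltnS; apply: ltnW | case: (next_is_inv l) hnext].
Qed.

Definition tsign (e : bool) : int := if e then 1 else -1.
Definition tletter (q : bool * Z2) : GW := [:: inl (tsign q.1); inr q.2].
Definition tword (p : tform) : GW := inr p.1 :: flatten (map tletter p.2).

Lemma push_tletters k e Z : wf Z ->
  foldr (@push _ _) Z (flatten (map tletter (nseq k (e, 0)))) = push (inl (tsign e *+ k)) Z.
Proof.
move=> hZ; elim: k => [|k IH]; first by rewrite push_inl0.
have -> : flatten (map tletter (nseq k.+1 (e, 0))) =
  tletter (e, 0) ++ flatten (map tletter (nseq k (e, 0))) by [].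
rewrite foldr_cat IH; change (push (inl (tsign e)) (push (inr 0) (push (inl (tsign e *+ k)) Z))
  = push (inl (tsign e *+ k.+1)) Z).
by rewrite push_inr0 ?push_wf // push_inl_add // -mulrS.
Qed.

Lemma tsign_abs (n : int) : n != 0 -> tsign (0 < n) *+ (absz n).-1.+1 = n.
Proof. by case: n => [[|k]|k] //= _; rewrite ?natz // NegzE mulNrn natz. Qed.

Lemma norm_tword_step s p : norm (tword (tstep s p)) = push s (norm (tword p)).
Proof.
case: p => u l; case: s => [n|v]; last first.
  have -> : tword (tstep (inr v) (u, l)) = inr (v + u) :: flatten (map tletter l) by [].
  by rewrite !norm_cons push_inr_add // norm_wf.
have [->|hn] := eqVneq n 0; first by rewrite tstep0L push_inl0 // norm_wf.
set k := (absz n).-1; set e := 0 < n.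
have -> : tword (tstep (inl n) (u, l)) =
    inr 0 :: flatten (map tletter (nseq k (e, 0))) ++ inl (tsign e) :: tword (u, l).
  by rewrite /tstep (negbTE hn) /tword /= map_cat flatten_cat.
rewrite norm_cons /norm foldr_cat -/(norm (inl (tsign e) :: tword (u, l))).
rewrite push_tletters ?norm_wf // norm_cons push_inl_add ?norm_wf //.
have -> : tsign e *+ k + tsign e = n by rewrite -mulrSr tsign_abs.
by rewrite push_inr0 // push_wf // norm_wf.
Qed.

Lemma norm_tword w : norm (tword (tf w)) = norm w.
Proof.
elim: w => [|s w IH]; last by rewrite tf_cons norm_tword_step IH.
by have -> : tword (tf [::]) = [:: inr 0] by []; rewrite norm_cons push_inr0.
Qed.

Lemma tf_inj u w : wf u -> wf w -> tf u = tf w -> u = w.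
Proof.
move=> hu hw e; have := norm_tword u; rewrite e norm_tword.
by rewrite (normK hu) (normK hw).
Qed.

(* psi on t-forms: a generator v of the second factor Z^2 maps to t v t^-1. *)
Definition psi_tstep (s : syl Z2 Z2) (q : tform) : tform :=
  match s with
  | inl y => (y + q.1, q.2)
  | inr z => if z == 0 then q else (0, (true, z) :: (false, q.1) :: q.2)
  end.

Lemma tf_psi_syl s q : foldr tstep q (psi_syl s) = psi_tstep s q.
Proof.
case: s => v; have [->|hv] := eqVneq v 0.
- by rewrite /= add0r; case: q.
- by have -> : psi_syl (inl v) = [:: inr v] by rewrite /= (negbTE hv).
- by [].
- have -> : psi_syl (inr v) = [:: inl 1; inr v; inl (-1)].
    have emb : push (inr v) (wone int Z2) = [:: inr v] by rewrite /= (negbTE hv).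
    by rewrite /psi_syl emb /= (negbTE hv).
  by rewrite /= (negbTE hv) addr0.
Qed.

Lemma tf_psi x : tf (flatten (map psi_syl x)) = foldr psi_tstep (0, [::]) x.
Proof. by elim: x => [|s x IH] //=; rewrite tf_cat IH tf_psi_syl. Qed.

(* An alternating reduced t-form u_0 (t u_1 t^-1) u_2 (t u_3 t^-1) ... is the
   t-form of the image under psi of u_0 * u_1' * u_2 * u_3' ..., where v'
   denotes v in the second factor. *)
Fixpoint psi_pre_letters (l : seq (bool * Z2)) : word Z2 Z2 :=
  match l with
  | (true, x) :: (false, y) :: l' => inr x :: inl y :: psi_pre_letters l'
  | _ => [::]
  end.
Definition psi_pre (p : tform) : word Z2 Z2 := inl p.1 :: psi_pre_letters p.2.

Lemma psi_tstep_pre (p : tform) : alternating p.2 -> treduced p ->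
  foldr psi_tstep (0, [::]) (psi_pre p) = p.
Proof.
case: p => u l /= ha hl.
suff -> : foldr psi_tstep (0, [::]) (psi_pre_letters l) = (0, l) by rewrite /= addr0.
move: {2}(size l) (leqnn (size l)) => n; elim: n l ha hl => [|n IH] [|[[] x] l] //.
case: l => [|[[] y] l] //= ha hl hs.
have hx : x != 0 by move: hl => /andP[]; rewrite /tcompat /= orbF.
have hl' : sorted tcompat l by move: hl => /= /andP[_ /path_sorted].
by rewrite IH //= ?addr0 ?(negbTE hx) //; lia.
Qed.

Lemma fix_in_psi_image g : wf g -> phi g = g -> exists2 w, wf w & psi w = g.
Proof.
move=> hg hphi; set p := tf g.
have hfix : phi_tform p = p := fix_phi_tform hg hphi.
have hhead : ~~ next_is_inv p.2.
  move: (congr1 fst hfix) => /=; rewrite -{2}(addr0 p.1) => /addrI /eqP.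
  by rewrite oppr_eq0; case: (next_is_inv p.2).
have halt := phi_letters_fixed (congr1 snd hfix) hhead.
have hpre : tf (flatten (map psi_syl (psi_pre p))) = p.
  by rewrite tf_psi psi_tstep_pre // treduced_tf.
exists (norm (psi_pre p)); first exact: norm_wf.
rewrite psi_norm; apply: tf_inj; [exact: psi_wf | exact: hg | ].
by rewrite /psi ext_flat tf_norm hpre // treduced_tf.
Qed.

(* psi is injective: images of reduced words have reduced t-forms, which are
   trivial only for the trivial word. *)
Lemma psi_tform_head x :
  wf x -> (foldr psi_tstep (0, [::]) x).1 = if x is inl y :: _ then y else 0.
Proof.
case: x => [|[y|z] x] // hx /=; last by have /= hz := wf_nzsyl hx; rewrite (negbTE hz).
case: x hx => [|[y'|z] x] hx /=; rewrite ?addr0 //; first by rewrite wf_same_side in hx.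
by have /= hz := wf_nzsyl (wf_cons hx); rewrite (negbTE hz) addr0.
Qed.

Lemma treduced_psi x : wf x -> treduced (foldr psi_tstep (0, [::]) x).
Proof.
elim: x => [|s x IH] // h; have hx := wf_cons h; have IHx := IH hx.
case: s h => [y|z] h /=; first exact: IHx.
have /= hz := wf_nzsyl h; rewrite (negbTE hz) /treduced /= {1}/tcompat /= hz /=.
rewrite (psi_tform_head hx); case: x {IH} hx IHx h => [|[y|z'] x] // hx IHx h.
  exact: path_tcompat (wf_nzsyl hx) IHx.
by rewrite wf_same_side in h.
Qed.

Lemma psi_trivial_kernel x : wf x -> psi x = [::] -> x = [::].
Proof.
move=> hx h; have e : foldr psi_tstep (0, [::]) x = (0, [::]).
  by rewrite -tf_psi -tf_norm ?tf_psi ?treduced_psi // -ext_flat -/psi h.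
case: x {h} hx e => [|[y|z] x] // hx e; have /= hs := wf_nzsyl hx.
  by move: (congr1 fst e); rewrite (psi_tform_head hx) => /eqP; rewrite (negbTE hs).
by move: e => /=; rewrite (negbTE hs).
Qed.

Lemma psi_inj u v : wf u -> wf v -> psi u = psi v -> u = v.
Proof.
move=> hu hv e; have hv' := winv_wf hv.
have h1 : psi (wmul u (winv v)) = [::] by rewrite psi_mul psi_inv // e wmulwV // psi_wf.
have := winv_unique hu hv' (psi_trivial_kernel (wmul_wf u hv') h1).
by move/(congr1 (@winv Z2 Z2)); rewrite !winvK.
Qed.

Definition fix_gens : seq GW :=
  [:: a_; b_; wmul t_ (wmul a_ (winv t_)); wmul t_ (wmul b_ (winv t_))].

Lemma fix_gens_wf : all wf fix_gens. Proof. by []. Qed.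

Lemma gen_fixed g : gen fix_gens g -> phi g = g.
Proof.
have phi_gens s : s \in fix_gens -> phi s = s by rewrite !inE => /or4P[] /eqP ->.
move=> /genE[l [hl ->]].
rewrite /phi (ext_gfold phi_syl_wf phiD.1 phiD.2) ?(gen_list_wf fix_gens_wf) //.
congr gfold; rewrite -[RHS]map_id; apply/eq_in_map => -[b s] /(allP hl) /phi_gens.
by rewrite /phi /= => ->.
Qed.

Lemma Z2_decomp (v : Z2) : v = (1, 0) *~ v.1 + (0, 1) *~ v.2.
Proof.
case: v => x y; apply/eqP; rewrite xpair_eqE /=.
have /= -> := raddfMz (@fst int int) x (1, 0); have /= -> := raddfMz (@snd int int) x (1, 0).
have /= -> := raddfMz (@fst int int) y (0, 1); have /= -> := raddfMz (@snd int int) y (0, 1).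
by rewrite !mul0rz addr0 add0r !intz !eqxx.
Qed.

Lemma embR_ab (v : Z2) : embR int v = wmul (zpow a_ v.1) (zpow b_ v.2).
Proof.
have hz := additive_zpow (@embR_wf int Z2) (@embRD int Z2).
have -> : a_ = embR int (1, 0) by []; have -> : b_ = embR int (0, 1) by [].
by rewrite !hz -embRD -Z2_decomp.
Qed.

Lemma gen_psi w : gen fix_gens (psi w).
Proof.
elim: w => [|s w IH]; first exact: gen_nil.
apply: (gen_mul fix_gens_wf) => //; case: s => v; rewrite /psi_syl -/(embR int v) embR_ab.
  exact: gen_zpow2.
by rewrite -/(conjw t_ _) conjM ?zpow_wf // !conj_zpow //; apply: gen_zpow2.
Qed.

Lemma fix_iff_psi_image g : wf g -> (phi g = g <-> exists2 w, wf w & psi w = g).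
Proof.
move=> hg; split; first exact: fix_in_psi_image.
by case=> w _ <-; apply/gen_fixed/gen_psi.
Qed.

Lemma fix_iff_gen g : wf g -> (phi g = g <-> gen fix_gens g).
Proof.
move=> hg; split; last exact: gen_fixed.
by move=> /(fix_in_psi_image hg)[w _ <-]; apply: gen_psi.
Qed.

Definition coord n (i : 'I_n) (x : int) : 'rV[rat]_n := x%:~R *: delta_mx 0 i.

Lemma coordD n (i : 'I_n) x y : coord i (x + y) = coord i x + coord i y.
Proof. by rewrite /coord intrD scalerDl. Qed.

Lemma coord_pairD n (i j : 'I_n) (v w : Z2) :
  coord i (v + w).1 + coord j (v + w).2 = (coord i v.1 + coord j v.2) + (coord i w.1 + coord j w.2).
Proof. by rewrite !coordD addrACA. Qed.

(* G has rank 3: t, a, b generate it, and abelianizing onto Q^3 shows that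
   no two elements do. *)
Definition G_gens : seq GW := [:: t_; a_; b_].

Lemma G_gens_wf : all wf G_gens. Proof. by []. Qed.

Lemma gen_G g : wf g -> gen G_gens g.
Proof.
elim: g => [|s g IH] h; first exact: gen_nil.
have -> : s :: g = wmul [:: s] g by rewrite /wmul /= push_wf_cons.
apply: (gen_mul G_gens_wf); last exact: IH (wf_cons h).
have /= hs := wf_nzsyl h; case: s {h IH} hs => [n|v] hs.
- have -> : [:: inl n] = embL Z2 n by rewrite /embL /= (negbTE hs).
  rewrite -(intz n) -(additive_zpow (@embL_wf int Z2) (@embLD int Z2)).
  by have -> : embL Z2 1 = t_ by []; apply: (gen_zpow G_gens_wf); apply: gen_mem.
- have -> : [:: inr v] = embR int v by rewrite /embR /= (negbTE hs).
  by rewrite embR_ab; apply: gen_zpow2.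
Qed.

Lemma rank_G_lb S : generates S (@reduced int Z2) -> (3 <= size S)%N.
Proof.
case=> hS hgen; have hSw : all wf S by apply: sub_all hS => s; rewrite reducedE.
apply: (@rank_lb _ _ _ _ (coord 0) (fun v => coord 1 v.1 + coord 2 v.2)) => //.
- exact: coordD.
- exact: coord_pairD.
move=> i; exists (nth [::] G_gens i).
  by apply/(hgen _ _).1; case: i => [[|[|[|k]]] hi].
apply/rowP => j; rewrite !mxE.
by case: i j => [[|[|[|k]]] hi] [[|[|[|l]]] hj] //=; rewrite !mxE.
Qed.

(* Fix(phi) has rank 4: lifting a generating set of Fix(phi) through the
   injective map psi gives a generating set of Z^2 * Z^2, whose
   abelianization is Z^4. *)
Definition Z2Z2_gens : seq (word Z2 Z2) :=
  [:: [:: inl (1, 0)]; [:: inl (0, 1)]; [:: inr (1, 0)]; [:: inr (0, 1)]].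

Lemma lift_seq (T U : eqType) (f : T -> U) (P : pred T) (S : seq U) :
  (forall s, s \in S -> exists2 w, P w & f w = s) -> exists W, map f W = S /\ all P W.
Proof.
elim: S => [|s S IH] h; first by exists [::].
have [w hw e] := h s (mem_head _ _).
have [|W [e2 hW]] := IH; first by move=> s' h'; apply: h; rewrite inE h' orbT.
by exists (w :: W); rewrite /= e e2 hw.
Qed.

Lemma rank_Fix_lb S : generates S Fix -> (4 <= size S)%N.
Proof.
case=> hS hgen; have hSw : all wf S by apply: sub_all hS => s; rewrite reducedE.
have fix_S s : s \in S -> Fix s.
  by move=> hs; apply/(hgen _ (allP hS s hs)); apply: gen_mem.
have [W [eW hW]] : exists W, map psi W = S /\ all wf W.
  by apply: lift_seq => s /fix_S[hs hphi]; apply: fix_in_psi_image hphi; rewrite -reducedE.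
have gen_W x : wf x -> gen W x.
  move=> hx; apply: (gen_ext_preimage psi_syl_wf psiD.1 psiD.2 psi_inj) => //; rewrite eW.
  have hpx : reduced (psi x) by rewrite reducedE psi_wf.
  by apply/(hgen _ hpx).1; split => //; apply/fix_iff_psi_image; [exact: psi_wf | exists x].
rewrite -eW size_map.
apply: (@rank_lb _ _ _ _ (fun v => coord 0 v.1 + coord 1 v.2)
  (fun v => coord 2 v.1 + coord 3 v.2)) => //.
- exact: coord_pairD.
- exact: coord_pairD.
move=> i; exists (nth [::] Z2Z2_gens i); first by apply: gen_W; case: i => [[|[|[|[|k]]]] hi].
apply/rowP => j; rewrite !mxE.
by case: i j => [[|[|[|[|k]]]] hi] [[|[|[|[|l]]]] hj] //=; rewrite !mxE.
Qed.

Lemma Fix_phi g : wf g -> (Fix g <-> phi g = g).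
Proof. by move=> hg; rewrite /Fix reducedE; split=> [[]|]. Qed.

Lemma Fix_iff_gen g : reduced g -> (Fix g <-> gen fix_gens g).
Proof. by rewrite reducedE => hg; apply: iff_trans (Fix_phi hg) (fix_iff_gen hg). Qed.

Lemma Fix_iff_psi_image g : reduced g -> (Fix g <-> exists2 w, reduced w & psi w = g).
Proof.
rewrite reducedE => hg; apply: iff_trans (Fix_phi hg) (iff_trans (fix_iff_psi_image hg) _).
by split=> -[w hw <-]; exists w => //; move: hw; rewrite reducedE.
Qed.

Theorem mainTheorem13 :
  (forall g : GW, reduced g ->
     (Fix g <-> gen [:: a_; b_; wmul t_ (wmul a_ (winv t_)); wmul t_ (wmul b_ (winv t_))] g)) /\
  {in @reduced Z2 Z2 &, injective psi} /\
  (forall g : GW, reduced g -> (Fix g <-> exists2 w, reduced w & psi w = g)) /\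
  has_rank Fix 4 /\ has_rank (@reduced int Z2) 3 /\ 4 = (2 * (3 - 1))%N.
Proof.
split; first exact: Fix_iff_gen.
split; first by move=> u v hu hv; apply: psi_inj; rewrite -reducedE.
split; first exact: Fix_iff_psi_image.
split.
  split; last exact: rank_Fix_lb.
  by exists fix_gens; split=> //; split; [exact: fix_gens_wf | exact: Fix_iff_gen].
split; last by [].
split; last exact: rank_G_lb.
exists G_gens; split=> //; split=> // g hg.
by split=> // _; apply: gen_G; rewrite -reducedE.
Qed.
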